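(* Let $p\in[1,\infty)$, $w$ a weight sequence, and let $A\subset L_{p,w}$ be bounded in $\|\cdot\|_{p,w}$. Then $A$ is equinormed with respect to $\{\|\cdot\|_{p,w,i}\}_{i\in\mathbb{N}}$ if and only if $$\forall\varepsilon>0\ \exists N\in\mathbb{N}\ \forall a\in A\ \forall i\ge N:\ \sum_{j=i+1}^\infty|a_j|^p\, w_{(\sigma^a)^{-1}_j}<\varepsilon.$$
   Context: A weight sequence is a sequence $w=(w_i)$ of positive reals with $w_1=1\ge w_2\ge\dots$, $w_i\to0$, and $\sum_i w_i=+\infty$. For a real sequence $a$, $\|a\|_{p,w}=\sup_{\sigma}\big(\sum_{i=1}^\infty |a_{\sigma_i}|^p w_i\big)^{1/p}$ over all permutations $\sigma$ of $\mathbb{N}$; $L_{p,w}$ is the set of real sequences with finite norm. $\|a\|_{p,w,i}=\|(a_1,\dots,a_i,0,0,\dots)\|_{p,w}$. $A$ is equinormed if $\forall\varepsilon>0\ \exists i\ \forall a\in A:\ \|a\|_{p,w}\le\|a\|_{p,w,i}+\varepsilon$. For $a\in L_{p,w}$, $\sigma^a:\mathbb{N}\to\mathbb{N}$ is defined recursively: $\sigma^a_i$ is the element $j$ of $\mathbb{N}\setminus\{\sigma^a_1,\dots,\sigma^a_{i-1}\}$ with $|a_j|$ maximal, taking the smallest such index in case of ties (well defined for $a\in L_{p,w}$, injective, with $|a_{\sigma^a_i}|$ nonincreasing). $(\sigma^a)^{-1}$ is its inverse on $\sigma^a(\mathbb{N})$, with the convention $w_{(\sigma^a)^{-1}_j}:=0$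 if $j\notin\sigma^a(\mathbb{N})$. *)

(* over an abstract R : realType.
   Sequences are indexed from 0 (paper index k corresponds to Rocq index k-1). *)
From HB Require Import structures.
From mathcomp Require Import all_boot all_order all_algebra.
From mathcomp Require Import all_classical all_reals all_analysis.
Set Implicit Arguments. Unset Strict Implicit. Unset Printing Implicit Defensive.
Import Order.TTheory GRing.Theory Num.Theory.
Local Open Scope classical_set_scope.
Local Open Scope ring_scope.

Section Defs.
Variable R : realType.

Definition weight_seq (w : nat -> R) : Prop :=
  [/\ w 0%N = 1, (forall i, 0 < w i), (forall i, w i.+1 <= w i),
      w @ \oo --> 0 & (\sum_(0 <= i <oo) (w i)%:E = +oo)%E].

Definition normpw (p : R) (w : nat -> R) (a : nat -> R) : \bar R :=
  ereal_sup [set poweR (\sum_(0 <= i <oo) (powR `|a (s i)| p * w i)%:E) p^-1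
            | s in [set s : nat -> nat | bijective s]].

Definition Lpw (p : R) (w : nat -> R) (a : nat -> R) : Prop :=
  (normpw p w a < +oo)%E.

Definition trunc (i : nat) (a : nat -> R) : nat -> R :=
  fun j => if (j < i)%N then a j else 0.

Definition normpwi (p : R) (w : nat -> R) (i : nat) (a : nat -> R) : \bar R :=
  normpw p w (trunc i a).

Definition equinormed (p : R) (w : nat -> R) (A : set (nat -> R)) : Prop :=
  forall eps : R, 0 < eps -> exists i : nat, forall a, A a ->
    (normpw p w a <= normpwi p w i a + eps%:E)%E.

Definition sigma_next (a : nat -> R) (l : seq nat) : nat :=
  xget 0%N [set j | j \notin l /\ (forall k, k \notin l -> `|a k| <= `|a j|)
                    /\ (forall k, k \notin l -> `|a k| = `|a j| -> (j <= k)%N)].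

Fixpoint sigma_list (a : nat -> R) (n : nat) : seq nat :=
  match n with
  | 0%N => [::]
  | n'.+1 => rcons (sigma_list a n') (sigma_next a (sigma_list a n'))
  end.

Definition sigma (a : nat -> R) (i : nat) : nat := sigma_next a (sigma_list a i).

(* w_{(sigma^a)^{-1}_j}, with the convention 0 if j is not in the range *)
Definition winv (w : nat -> R) (a : nat -> R) (j : nat) : R :=
  if pselect (exists i, sigma a i = j) is left _
  then w (xget 0%N [set i | sigma a i = j]) else 0.

End Defs.

(* If [||a|| <= M] then [a j --> 0], so the greedy enumeration [sigma a] of
   the indices by decreasing [|a j|] is injective and, by the rearrangement
   inequality, [||a||^p] is the supremum of the sorted partial sums
   [\sum_(k < n) |a (sigma a k)|^p w k]; the series of the statement is the
   part of this sum carried by the indices [j >= i].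

   If [A] is equinormed, then [||a|| <= ||trunc i a|| + d], and convexity of
   [x ^ p] turns this into a bound [d (M + 1)^p] on how much any arrangement
   sum of [a] may exceed the sorted sum of the truncation.  This makes the tails
   of the sorted sums uniformly small and, inserting one entry [a j] with
   [j >= i] into the sorted truncation, also makes [|a j|^p] uniformly small;
   the part of the sorted sum carried by [j >= i] is then small.

   Conversely, if [S] is the part carried by [j < N] and [T] the rest, then
   [S^(1/p) <= ||trunc N a||] and [||a|| <= (S + T)^(1/p) <= S^(1/p) + T^(1/p)]. *)

From HB Require Import structures.
From mathcomp Require Import all_boot all_order all_algebra.
From mathcomp Require Import all_classical all_reals all_analysis.
From mathcomp Require Import ring lra zify.
Import Order.TTheory GRing.Theory Num.Theory.
Set Implicit Arguments. Unset Strict Implicit. Unset Printing Implicit Defensive.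
Local Open Scope classical_set_scope.
Local Open Scope ring_scope.

Lemma leq_bigmax_id (l : seq nat) x : x \in l -> (x <= \max_(y <- l) y)%N.
Proof. by move=> xl; exact: (@leq_bigmax_seq _ l xpredT id x xl). Qed.

Lemma bigmaxS_notin (l : seq nat) : (\max_(x <- l) x).+1 \notin l.
Proof. by apply/negP => /leq_bigmax_id; rewrite ltnn. Qed.

Lemma injective_extend_bij (t : nat -> nat) n : {in gtn n &, injective t} ->
  exists2 s : nat -> nat, bijective s & {in gtn n, s =1 t}.
Proof.
move=> tinj; set l := map t (iota 0 n).
have ul : uniq l.
  by rewrite map_inj_in_uniq ?iota_uniq // => h k; rewrite !mem_iota; apply: tinj.
set m := ((\max_(x <- l) x).+1 + n)%N.
have lm x : x \in l -> (x < m)%N.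
  by move=> /leq_bigmax_id xl; rewrite /m; lia.
set L := l ++ [seq x <- iota 0 m | x \notin l].
have uL : uniq L.
  rewrite cat_uniq ul filter_uniq ?iota_uniq // andbT.
  by apply/hasPn => x; rewrite mem_filter => /andP[].
have memL : L =i iota 0 m.
  move=> x; rewrite mem_cat mem_filter mem_iota add0n /=.
  by case xl: (x \in l) => //=; rewrite lm.
have sL : size L = m.
  by rewrite (perm_size (uniq_perm uL (iota_uniq 0 m) memL)) size_iota.
exists (fun k => if (k < m)%N then nth 0%N L k else k).
  exists (fun x => if (x < m)%N then index x L else x) => [k|x] /=.
    case: (ltnP k m) => km; last by rewrite ltnNge km.
    have : nth 0%N L k \in iota 0 m by rewrite -memL mem_nth ?sL.
    by rewrite mem_iota => /= ->; rewrite index_uniq ?sL.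
  case: (ltnP x m) => xm; last by rewrite ltnNge xm.
  have xL : x \in L by rewrite memL mem_iota.
  by rewrite -sL index_mem xL nth_index.
move=> k; rewrite inE /= => kn; have km : (k < m)%N by rewrite /m; lia.
by rewrite km nth_cat size_map size_iota kn (nth_map 0%N) ?size_iota ?nth_iota.
Qed.

Lemma injective_preimage_bounded (t : nat -> nat) : injective t ->
  forall J, exists n, forall h, (t h < J)%N -> (h < n)%N.
Proof.
move=> tinj; elim=> [|J [n Hn]]; first by exists 0%N.
case: (pselect (exists h, t h = J)) => [[h0 tJ]|noJ].
  exists (maxn n h0.+1) => h; rewrite ltnS leq_eqVlt => /orP[/eqP|/Hn hn].
    by rewrite -tJ => /tinj ->; rewrite leq_max ltnSn orbT.
  by rewrite leq_max hn.
exists n => h; rewrite ltnS leq_eqVlt => /orP[/eqP tJ|/Hn //].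
by case: noJ; exists h.
Qed.

Lemma size_map_iota (f : nat -> nat) k : size (map f (iota 0 k)) = k.
Proof. by rewrite size_map size_iota. Qed.

Definition insert_at (t : nat -> nat) r j k : nat :=
  if (k < r)%N then t k else if k == r then j else t k.-1.

Lemma insert_at_inj (t : nat -> nat) r j L : (r <= L)%N ->
  {in gtn L &, injective t} -> (forall m, (m < L)%N -> t m != j) ->
  {in gtn L.+1 &, injective (insert_at t r j)}.
Proof.
move=> rL tinj tj h k; rewrite !inE /insert_at => hL kL.
case: (ltngtP h r) => hr; case: (ltngtP k r) => kr.
all: try by move=> /tinj; rewrite !inE; lia.
all: try by move=> /eqP; rewrite (negPf (tj _ _)); lia.
all: try by move=> /esym /eqP; rewrite (negPf (tj _ _)); lia.
all: by move=> _; lia.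
Qed.

Lemma sum_insert_at (V : nmodType) (F : nat -> nat -> V) (t : nat -> nat) r j L :
  (r <= L)%N ->
  \sum_(0 <= k < L.+1) F k (insert_at t r j k) =
  \sum_(0 <= k < r) F k (t k) + F r j + \sum_(r <= k < L) F k.+1 (t k).
Proof.
move=> rL; have rL1 : (r < L.+1)%N by rewrite ltnS.
rewrite (big_cat_nat (leq0n r) (ltnW rL1)) (big_ltn rL1) big_add1 /= addrA.
congr (_ + _ + _).
- by apply: eq_big_nat => k /andP[_ kr]; rewrite /insert_at kr.
- by rewrite /insert_at ltnn eqxx.
- apply: eq_big_nat => k /andP[rk _]; rewrite /insert_at ltnNge (leqW rk) /=.
  by rewrite gtn_eqF ?ltnS.
Qed.

Section Greedy.
Variable R : realDomainType.

Definition greedy (g : nat -> R) (t : nat -> nat) : Prop :=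
  forall k, t k \notin map t (iota 0 k) /\
            forall x, x \notin map t (iota 0 k) -> g x <= g (t k).

Variables (g : nat -> R) (t : nat -> nat).
Hypothesis gt : greedy g t.

Lemma mem_map_iotaS (k x : nat) :
  (x \in map t (iota 0 k.+1)) = (x \in map t (iota 0 k)) || (x == t k).
Proof. by rewrite -addn1 iotaD map_cat mem_cat /= in_cons orbF add0n. Qed.

Lemma greedy_inj : injective t.
Proof.
have tneq h k : (h < k)%N -> t h != t k.
  move=> hk; apply: contraNneq (gt k).1 => <-.
  by rewrite map_f // mem_iota.
move=> h k thk; case: (ltngtP h k) => // [/tneq|/tneq]; by rewrite thk eqxx.
Qed.

Lemma greedy_nonincreasing m n : (m <= n)%N -> g (t n) <= g (t m).
Proof.
move=> mn; apply: (gt m).2; apply: contraNN (gt n).1 => /mapP[h].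
by rewrite mem_iota => /= hm ->; rewrite map_f // mem_iota; lia.
Qed.

Lemma greedy_sum_max_from m l0 (S : seq nat) : uniq S -> size S = m ->
  {in S, forall x, x \notin map t (iota 0 l0)} ->
  \sum_(x <- S) g x <= \sum_(l0 <= k < l0 + m) g (t k).
Proof.
elim: m l0 S => [|m IH] l0 S uS sS HS.
  by move/size0nil: sS => ->; rewrite big_nil addn0 big_geq.
rewrite big_ltn ?addnS ?ltnS ?leq_addr // -addSn.
have HS' x : x \in S -> x != t l0 -> x \notin map t (iota 0 l0.+1).
  by move=> xS xt; rewrite mem_map_iotaS negb_or xt andbT HS.
case: (boolP (t l0 \in S)) => tS.
  rewrite (big_rem _ tS) lerD // IH ?rem_uniq ?size_rem ?sS // => x xS.
  apply: HS'; first exact: mem_rem xS.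
  by apply: contraTneq xS => ->; rewrite mem_rem_uniqF.
case: S uS sS HS HS' tS => [//|x S] /= /andP[xS uS] [sS] HS HS' tS.
rewrite big_cons lerD ?(gt l0).2 ?HS ?mem_head // IH // => y yS.
apply: HS'; first by rewrite in_cons yS orbT.
by apply: contraNneq tS => <-; rewrite in_cons yS orbT.
Qed.

Lemma greedy_prefix_sum_max (s : nat -> nat) n : {in gtn n &, injective s} ->
  \sum_(k < n) g (s k) <= \sum_(k < n) g (t k).
Proof.
move=> sinj; rewrite -(big_mkord xpredT (g \o s)) -(big_mkord xpredT (g \o t)).
have uS : uniq (map s (iota 0 n)).
  by rewrite map_inj_in_uniq ?iota_uniq // => h k; rewrite !mem_iota; apply: sinj.
have := @greedy_sum_max_from n 0 _ uS (size_map_iota s n) (fun x _ => isT).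
by rewrite add0n big_map /index_iota subn0.
Qed.

End Greedy.

Lemma sum_by_parts (R : comRingType) (x v : nat -> R) n :
  \sum_(k < n) x k * v k =
  \sum_(k < n) (v k - v k.+1) * \sum_(i < k.+1) x i + v n * \sum_(i < n) x i.
Proof.
elim: n => [|n IH]; first by rewrite !big_ord0 mulr0 addr0.
rewrite big_ord_recr /= IH big_ord_recr /= (big_ord_recr n) /=.
set P := \sum_(i < n) x i; ring.
Qed.

Lemma greedy_rearrangement (R : realDomainType) (g : nat -> R) t (v : nat -> R)
    (s : nat -> nat) n :
  greedy g t -> (forall k, 0 <= v k) -> (forall k, v k.+1 <= v k) ->
  {in gtn n &, injective s} ->
  \sum_(k < n) g (s k) * v k <= \sum_(k < n) g (t k) * v k.
Proof.
move=> gt v0 vdec sinj.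
have prefix r : (r <= n)%N -> \sum_(i < r) g (s i) <= \sum_(i < r) g (t i).
  move=> rn; apply: (greedy_prefix_sum_max gt) => h k; rewrite !inE => hr kr.
  by apply: sinj; rewrite inE; lia.
rewrite (sum_by_parts (g \o s)) (sum_by_parts (g \o t)) lerD ?ler_wpM2l ?prefix //.
by apply: ler_sum => k _; rewrite ler_wpM2l ?subr_ge0 ?prefix.
Qed.

Lemma ler_sum_widen (R : numDomainType) (F : nat -> R) m n : (m <= n)%N ->
  (forall k, 0 <= F k) -> \sum_(k < m) F k <= \sum_(k < n) F k.
Proof.
move=> mn F0; rewrite (big_ord_widen n F mn) [leRHS](bigID (fun k : 'I_n => (k < m)%N)).
by rewrite lerDl sumr_ge0.
Qed.

Lemma sum_insert_ge (R : realDomainType) (c v : nat -> R) x r L : (r <= L)%N ->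
  0 <= c r -> (forall k, (r <= k)%N -> c k <= c r) ->
  (forall k, 0 <= v k) -> (forall k, v k.+1 <= v k) ->
  \sum_(0 <= k < L) c k * v k + (x - c r) * v r <=
  \sum_(0 <= k < r) c k * v k + x * v r + \sum_(r <= k < L) c k * v k.+1.
Proof.
move=> rL cr0 cmax v0 vdec.
rewrite (big_cat_nat (leq0n r) rL) /= -!addrA lerD2l.
have : \sum_(r <= k < L) c k * (v k - v k.+1) <= c r * v r.
  apply: le_trans (_ : \sum_(r <= k < L) c r * (v k - v k.+1) <= _).
    rewrite big_nat [leRHS]big_nat ler_sum // => k /andP[rk _].
    by rewrite ler_wpM2r ?subr_ge0 ?cmax.
  rewrite -mulr_sumr ler_wpM2l //.
  rewrite (eq_bigr (fun k => - (v k.+1 - v k))) => [|k _]; last by rewrite opprB.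
  by rewrite sumrN telescope_sumr // opprB gerDl oppr_le0.
rewrite (eq_bigr (fun k => c k * v k - c k * v k.+1)) => [|k _]; last by rewrite mulrBr.
rewrite sumrB; lra.
Qed.

Section PowR.
Variable R : realType.
Implicit Types r x y : R.

Lemma powRKV {r x : R} : r != 0 -> 0 <= x -> (x `^ r) `^ r^-1 = x.
Proof. by move=> r0 x0; rewrite -powRrM mulfV // powRr1. Qed.

Lemma powRVK {r x : R} : r != 0 -> 0 <= x -> (x `^ r^-1) `^ r = x.
Proof. by move=> r0 x0; rewrite -powRrM mulVf // powRr1. Qed.

Lemma ler_powR2 {r x y : R} : 0 < r -> 0 <= x -> 0 <= y -> (x `^ r <= y `^ r) = (x <= y).
Proof.
move=> r0 x0 y0; apply/idP/idP => [|xy].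
  rewrite -{2}(powRKV (lt0r_neq0 r0) x0) -{2}(powRKV (lt0r_neq0 r0) y0) => le.
  have ri0 : 0 <= r^-1 by rewrite invr_ge0 ltW.
  by apply: (ge0_ler_powR ri0); rewrite ?nnegrE ?powR_ge0.
by apply: (ge0_ler_powR (ltW r0)); rewrite ?nnegrE.
Qed.

Variable p : R.
Hypothesis p_ge1 : 1 <= p.

Let p_gt0 : 0 < p. Proof. exact: lt_le_trans ltr01 p_ge1. Qed.
Let p_neq0 : p != 0. Proof. exact: lt0r_neq0. Qed.

Lemma powR_superadditive x y : 0 <= x -> 0 <= y -> x `^ p + y `^ p <= (x + y) `^ p.
Proof.
move=> x0 y0; rewrite -(mulr_powRB1 x0 p_gt0) -(mulr_powRB1 y0 p_gt0).
rewrite -(mulr_powRB1 (addr_ge0 x0 y0) p_gt0) mulrDl.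
have powR_homo u : 0 <= u -> u <= x + y -> u `^ (p - 1) <= (x + y) `^ (p - 1).
  have p1 : 0 <= p - 1 by rewrite subr_ge0.
  by move=> u0 uxy; apply: (ge0_ler_powR p1); rewrite ?subr_ge0 ?nnegrE ?addr_ge0.
by rewrite lerD // ler_wpM2l // powR_homo // ?lerDl ?lerDr.
Qed.

Lemma powR_inv_subadditive x y : 0 <= x -> 0 <= y ->
  (x + y) `^ p^-1 <= x `^ p^-1 + y `^ p^-1.
Proof.
move=> x0 y0; rewrite -(ler_powR2 p_gt0) ?addr_ge0 ?powR_ge0 //.
by rewrite powRVK ?addr_ge0 // -{1}(powRVK p_neq0 x0) -{1}(powRVK p_neq0 y0)
  powR_superadditive ?powR_ge0.
Qed.

Lemma powR_addr_le x y d : 0 <= x -> x <= y -> 0 <= d -> d <= 1 ->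
  (x + d) `^ p <= x `^ p + d * (y + 1) `^ p.
Proof.
move=> x0 xy d0 d1; set Y := y + 1.
have Yx : 1 <= Y - x by rewrite /Y; lra.
(* x + d is the convex combination of Y and x with weight d / (Y - x) on Y. *)
set c := d / (Y - x).
have c0 : 0 <= c by rewrite divr_ge0 //; lra.
have cd : c <= d by rewrite ler_pdivrMr ?ler_peMr //; lra.
have xdE : x + d = c * Y + (1 - c) * x by rewrite /c; field; lra.
have := convex_powR p_ge1 (Itv01 c0 (le_trans cd d1)) (x := Y) (y := x).
rewrite !inE /= !in_itv /= !andbT => /(_ ltac:(rewrite /Y; lra) x0).
rewrite !convRE /= => h; rewrite xdE; apply: le_trans h _.
have -> : unstable.onem c = 1 - c by [].
have : 0 <= c * x `^ p by rewrite mulr_ge0 ?powR_ge0.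
have : c * Y `^ p <= d * Y `^ p by rewrite ler_wpM2r ?powR_ge0.
lra.
Qed.

End PowR.

Lemma nneseries_le_bound (R : realType) (u : nat -> R) i B : (forall k, 0 <= u k) ->
  (forall n, \sum_(i <= k < n) u k <= B) -> (\sum_(i <= k <oo) (u k)%:E <= B%:E)%E.
Proof.
move=> u0 uB; apply: lime_le; first by apply: is_cvg_nneseries => k _ _; rewrite lee_fin.
by apply: nearW => n; rewrite /= sumEFin lee_fin.
Qed.

Section WeightedNorm.
Variables (R : realType) (p : R) (w : nat -> R).
Hypotheses (p_ge1 : 1 <= p) (hw : weight_seq w).

Let p_gt0 : 0 < p. Proof. exact: lt_le_trans ltr01 p_ge1. Qed.
Let p_neq0 : p != 0. Proof. exact: lt0r_neq0. Qed.

Lemma weight_gt0 k : 0 < w k. Proof. by case: hw. Qed.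

Lemma weight_ge0 k : 0 <= w k. Proof. exact/ltW/weight_gt0. Qed.

Lemma weight_nonincreasing m n : (m <= n)%N -> w n <= w m.
Proof. by case: hw => _ _ wdec _ _; apply: Order.NatMonotonyTheory.nonincnP. Qed.

Lemma weight_le1 k : w k <= 1.
Proof. by case: hw => <- _ _ _ _; apply: weight_nonincreasing. Qed.

Lemma weight_sum_unbounded (B : R) : exists n, B < \sum_(k < n) w k.
Proof.
apply/not_existsP => small.
have : (\sum_(0 <= k <oo) (w k)%:E <= B%:E)%E.
  apply: nneseries_le_bound => [k|n]; first exact: weight_ge0.
  by rewrite big_mkord leNgt; apply/negP/small.
by case: hw => _ _ _ _ ->; rewrite leye_eq.
Qed.

Lemma normpw_ge_arrangement (a : nat -> R) (t : nat -> nat) n :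
  {in gtn n &, injective t} ->
  (((\sum_(k < n) `|a (t k)| `^ p * w k) `^ p^-1)%:E <= normpw p w a)%E.
Proof.
move=> tinj; have [s sbij st] := injective_extend_bij tinj.
apply: le_trans (ereal_sup_ubound _); last by exists s.
have term_ge0 (t' : nat -> nat) k : 0 <= `|a (t' k)| `^ p * w k.
  by rewrite mulr_ge0 ?powR_ge0 ?weight_ge0.
rewrite -poweR_EFin; apply: gt0_ler_poweR; first by rewrite invr_ge0 ltW.
- by rewrite in_itv /= leey lee_fin sumr_ge0.
- by rewrite in_itv /= leey andbT nneseries_ge0 // => k _ _; rewrite lee_fin.
rewrite (eq_bigr (fun k : 'I_n => `|a (s k)| `^ p * w k)) => [|k _]; last first.
  by rewrite st // inE ltn_ord.
rewrite -sumEFin -(big_mkord xpredT (fun k => (`|a (s k)| `^ p * w k)%:E)).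
by apply: nneseries_lim_ge => k _ _; rewrite lee_fin.
Qed.

Lemma normpw_le (a : nat -> R) (U : R) : 0 <= U ->
  (forall s : nat -> nat, bijective s ->
     forall n, \sum_(k < n) `|a (s k)| `^ p * w k <= U) ->
  (normpw p w a <= (U `^ p^-1)%:E)%E.
Proof.
move=> U0 sumU; apply/ereal_supP => _ [s sbij <-].
have term_ge0 k : 0 <= `|a (s k)| `^ p * w k by rewrite mulr_ge0 ?powR_ge0 ?weight_ge0.
rewrite -poweR_EFin; apply: gt0_ler_poweR; first by rewrite invr_ge0 ltW.
- by rewrite in_itv /= leey andbT nneseries_ge0 // => k _ _; rewrite lee_fin.
- by rewrite in_itv /= leey andbT lee_fin.
by apply: nneseries_le_bound => // n; rewrite big_mkord sumU.
Qed.

Lemma arrangement_sum_le (a : nat -> R) M (t : nat -> nat) n :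
  (normpw p w a <= M%:E)%E -> {in gtn n &, injective t} ->
  \sum_(k < n) `|a (t k)| `^ p * w k <= M `^ p.
Proof.
move=> aM /(normpw_ge_arrangement a) /le_trans /(_ aM); rewrite lee_fin => le.
have S0 : 0 <= \sum_(k < n) `|a (t k)| `^ p * w k.
  by rewrite sumr_ge0 // => k _; rewrite mulr_ge0 ?powR_ge0 ?weight_ge0.
by rewrite -(powRVK p_neq0 S0) ler_powR2 ?powR_ge0 // (le_trans _ le) ?powR_ge0.
Qed.

Lemma normpw_bounded_cvg0 (a : nat -> R) M :
  (normpw p w a <= M%:E)%E -> a @ \oo --> 0.
Proof.
move=> aM; apply/cvgr0Pnorm_lt => c c0; apply: contrapT => /= large.
have {}large K : exists j, (K <= j)%N /\ c <= `|a j|.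
  apply/not_existsP => small; apply: large; exists K => // j /= Kj.
  by rewrite ltNge; apply/negP => cj; apply: (small j).
have [phi phiP] := choice large.
pose t k := iter k (fun j => phi j.+1) (phi 0%N).
have t_inc k : (t k < t k.+1)%N by rewrite /t iterS; exact: (phiP _).1.
have t_large k : c <= `|a (t k)|.
  by case: k => [|k]; [exact: (phiP 0%N).2 | rewrite /t iterS; exact: (phiP _).2].
have t_inj : injective t := incn_inj (leq_mono (homo_ltn ltn_trans t_inc)).
have cp0 : 0 < c `^ p by rewrite powR_gt0.
have [n Wn] := weight_sum_unbounded (M `^ p / c `^ p).
have := arrangement_sum_le aM (in2W t_inj : {in gtn n &, injective t}).
apply/negP; rewrite -ltNge; apply: lt_le_trans (_ : c `^ p * \sum_(k < n) w k <= _).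
  by rewrite mulrC -ltr_pdivrMr.
rewrite mulr_sumr ler_sum // => k _; rewrite ler_wpM2r ?weight_ge0 //.
by rewrite ler_powR2 // ?(ltW c0) // t_large.
Qed.

Lemma winv_ge0 (a : nat -> R) j : 0 <= winv w a j.
Proof. by rewrite /winv; case: pselect => _ //; exact: weight_ge0. Qed.

End WeightedNorm.

Section Sigma.
Variables (R : realType) (a : nat -> R).

Lemma sigma_listE n : sigma_list a n = map (sigma a) (iota 0 n).
Proof.
elim: n => [//|n IH].
change (sigma_list a n.+1) with (rcons (sigma_list a n) (sigma a n)).
by rewrite IH -addn1 iotaD map_cat cats1.
Qed.

Hypothesis a_cvg0 : a @ \oo --> 0.

Lemma exists_max_outside (l : seq nat) :
  exists2 j, j \notin l & forall k, k \notin l -> `|a k| <= `|a j|.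
Proof.
case: (pselect (exists2 j, j \notin l & 0 < `|a j|)) => [[j1 j1l a1]|zero]; last first.
  exists (\max_(x <- l) x).+1 => [|k kl]; first exact: bigmaxS_notin.
  rewrite (le_trans _ (normr_ge0 _)) // leNgt; apply/negP => ak.
  by apply: zero; exists k.
have [K _ Ksmall] := cvgr0_norm_lt a a_cvg0 _ a1.
pose i0 : 'I_(maxn K j1.+1) := Ordinal (leq_trans (ltnSn j1) (leq_maxr K j1.+1)).
have [m ml mmax] := @arg_maxP _ _ _ i0 (fun k => val k \notin l) (fun k => `|a k|) j1l.
exists (val m) => // k kl; case: (ltnP k (maxn K j1.+1)) => kK.
  exact: (mmax (Ordinal kK)).
have Kk : (K <= k)%N by apply: leq_trans kK; rewrite leq_maxl.
exact: le_trans (ltW (Ksmall k Kk)) (mmax i0 j1l).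
Qed.

Lemma sigma_next_spec (l : seq nat) : sigma_next a l \notin l /\
  forall k, k \notin l -> `|a k| <= `|a (sigma_next a l)|.
Proof.
pose maximal j := j \notin l /\ forall k, k \notin l -> `|a k| <= `|a j|.
have ex_max : exists j, `[< maximal j >].
  by have [j jl jmax] := exists_max_outside l; exists j; apply/asboolP.
case: (ex_minnP ex_max) => m /asboolP [ml mmax] mmin.
suff [notin [max _]] : [set j | j \notin l /\ (forall k, k \notin l -> `|a k| <= `|a j|)
                   /\ (forall k, k \notin l -> `|a k| = `|a j| -> (j <= k)%N)]
          (sigma_next a l) by split.
apply: xgetPex; exists m; split => //; split => // k kl akm.
by apply: mmin; apply/asboolP; split => // k' k'l; rewrite akm; exact: mmax.
Qed.

Lemma greedy_sigma : greedy (fun j => `|a j|) (sigma a).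
Proof. by move=> k; rewrite /sigma -sigma_listE; exact: sigma_next_spec. Qed.

Lemma sigma_inj : injective (sigma a).
Proof. exact: greedy_inj greedy_sigma. Qed.

Lemma greedy_sigma_powR (p : R) : 0 <= p -> greedy (fun j => `|a j| `^ p) (sigma a).
Proof.
move=> p0 k; have [notin max] := greedy_sigma k; split => // x /max ax.
by apply: (ge0_ler_powR p0); rewrite ?nnegrE.
Qed.

Variable w : nat -> R.

Lemma winvE j n : (forall h, sigma a h = j -> (h < n)%N) ->
  winv w a j = \sum_(h < n) (if sigma a h == j then w h else 0).
Proof.
move=> Hn; rewrite /winv; case: pselect => [ex|nex]; last first.
  by rewrite big1 // => h _; case: eqP => // sh; case: nex; exists h.
have sj : sigma a (xget 0%N [set h | sigma a h = j]) = j := xgetPex 0%N ex.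
rewrite (bigD1 (Ordinal (Hn _ sj))) //= sj eqxx big1 ?addr0 // => h hne.
case: eqP => // /esym; rewrite -{1}sj => /sigma_inj eqh.
by move: hne; rewrite -val_eqE /= eqh eqxx.
Qed.

Lemma sum_winv (F : nat -> R) J : exists n0, forall n, (n0 <= n)%N ->
  \sum_(j < J) F j * winv w a j = \sum_(h < n | (sigma a h < J)%N) F (sigma a h) * w h.
Proof.
have [n0 Hn0] := injective_preimage_bounded sigma_inj J.
exists n0 => n n0n; have Hn h : (sigma a h < J)%N -> (h < n)%N.
  by move=> /Hn0 /leq_trans; apply.
under eq_bigr => j _.
  rewrite (@winvE j n) => [|h shj]; last by apply: Hn; rewrite shj.
  rewrite mulr_sumr; over.
rewrite exchange_big [RHS]big_mkcond /=; apply: eq_bigr => h _.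
rewrite -(@big_ord1_eq _ 0 +%R (fun j => F j * w h) (sigma a h) J) [RHS]big_mkcond.
apply: eq_bigr => j _.
by rewrite eq_sym; case: eqP; rewrite ?mulr0.
Qed.

End Sigma.

Section SortedSums.
Variables (R : realType) (p : R) (w : nat -> R).
Hypotheses (p_ge1 : 1 <= p) (hw : weight_seq w).

Let p_gt0 : 0 < p. Proof. exact: lt_le_trans ltr01 p_ge1. Qed.

Lemma sorted_sum_ge_arrangement (a : nat -> R) (s : nat -> nat) n :
  a @ \oo --> 0 -> {in gtn n &, injective s} ->
  \sum_(k < n) `|a (s k)| `^ p * w k <= \sum_(k < n) `|a (sigma a k)| `^ p * w k.
Proof.
move=> a0; apply: (greedy_rearrangement (greedy_sigma_powR a0 (ltW p_gt0))).
  exact: weight_ge0.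
by move=> k; apply: weight_nonincreasing.
Qed.

Lemma sorted_sum_le (a : nat -> R) M n : (normpw p w a <= M%:E)%E ->
  \sum_(k < n) `|a (sigma a k)| `^ p * w k <= M `^ p.
Proof.
move=> aM; apply: (arrangement_sum_le p_ge1 hw aM) => h k _ _.
exact/sigma_inj/(normpw_bounded_cvg0 p_ge1 hw aM).
Qed.

Lemma normpw_le_sorted (a : nat -> R) U : a @ \oo --> 0 ->
  (forall n, \sum_(k < n) `|a (sigma a k)| `^ p * w k <= U) ->
  (normpw p w a <= (U `^ p^-1)%:E)%E.
Proof.
move=> a0 sortedU; apply: (normpw_le p_ge1 hw) => [|s sbij n].
  by have := sortedU 0%N; rewrite big_ord0.
apply: le_trans (sortedU n); apply: (sorted_sum_ge_arrangement a0) => h k _ _.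
by move=> shk; exact: (bij_inj sbij shk).
Qed.

Lemma normpw_le_sorted_support (b : nat -> R) L : b @ \oo --> 0 ->
  (forall k, (L <= k)%N -> b (sigma b k) = 0) ->
  (normpw p w b <= ((\sum_(k < L) `|b (sigma b k)| `^ p * w k) `^ p^-1)%:E)%E.
Proof.
move=> b0 bL; apply: normpw_le_sorted => // n.
have term_ge0 k : 0 <= `|b (sigma b k)| `^ p * w k.
  by rewrite mulr_ge0 ?powR_ge0 ?weight_ge0.
case: (leqP n L) => nL.
  exact: (ler_sum_widen (F := fun k => `|b (sigma b k)| `^ p * w k)).
rewrite (big_ord_widen n (fun k => `|b (sigma b k)| `^ p * w k) (ltnW nL)).
rewrite [leLHS](bigID (fun k : 'I_n => (k < L)%N)) /=.
rewrite [X in _ + X <= _]big1 ?addr0 // => k.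
by rewrite -leqNgt => /bL ->; rewrite normr0 powR0 ?mul0r // lt0r_neq0.
Qed.

Lemma sorted_sum_le_dominated (a b : nat -> R) n :
  a @ \oo --> 0 -> b @ \oo --> 0 -> (forall j, `|b j| <= `|a j|) ->
  \sum_(k < n) `|b (sigma b k)| `^ p * w k <= \sum_(k < n) `|a (sigma a k)| `^ p * w k.
Proof.
move=> a0 b0 ba.
apply: le_trans (_ : \sum_(k < n) `|a (sigma b k)| `^ p * w k <= _).
  apply: ler_sum => k _; rewrite ler_wpM2r ?weight_ge0 //.
  by rewrite ler_powR2 ?ba ?normr_ge0.
by apply: (sorted_sum_ge_arrangement a0) => h k _ _; apply: sigma_inj.
Qed.

Lemma sorted_entry_le (b : nat -> R) n B : b @ \oo --> 0 ->
  \sum_(k < n.+1) `|b (sigma b k)| `^ p * w k <= B ->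
  `|b (sigma b n)| `^ p * \sum_(k < n.+1) w k <= B.
Proof.
move=> b0; apply: le_trans; rewrite mulr_sumr ler_sum // => k _.
rewrite ler_wpM2r ?weight_ge0 //.
by apply: (greedy_nonincreasing (greedy_sigma_powR b0 (ltW p_gt0))); rewrite -ltnS.
Qed.

Lemma sum_winv_tail_le (a : nat -> R) i J : a @ \oo --> 0 ->
  exists n0, forall n, (n0 <= n)%N ->
  \sum_(i <= j < J) `|a j| `^ p * winv w a j <=
  \sum_(0 <= h < n) (if (i <= sigma a h)%N then `|a (sigma a h)| `^ p else 0) * w h.
Proof.
move=> a0; pose G j := if (i <= j)%N then `|a j| `^ p else 0.
have [n0 winvJ] := sum_winv a0 w G J; exists n0 => n n0n.
have -> : \sum_(i <= j < J) `|a j| `^ p * winv w a j = \sum_(j < J) G j * winv w a j.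
  rewrite big_geq_mkord big_mkcond; apply: eq_bigr => j _.
  by rewrite /G; case: (leqP i j); rewrite /= ?mul0r.
rewrite big_mkord (winvJ n n0n) /G [leRHS](bigID (fun h : 'I_n => (sigma a h < J)%N)) /=.
rewrite lerDl sumr_ge0 // => h _; rewrite mulr_ge0 ?weight_ge0 //.
by case: ifP => // _; exact: powR_ge0.
Qed.

Lemma normpw_le_winv (a : nat -> R) N T : a @ \oo --> 0 ->
  (forall J, \sum_(N <= j < J) `|a j| `^ p * winv w a j <= T) ->
  (normpw p w a <= ((\sum_(j < N) `|a j| `^ p * winv w a j + T) `^ p^-1)%:E)%E.
Proof.
move=> a0 tailT; apply: (normpw_le_sorted a0) => n.
set J := (\sum_(k < n) sigma a k).+1.
have sJ k : (k < n)%N -> (sigma a k < J)%N.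
  by move=> kn; rewrite ltnS (bigD1 (Ordinal kn)) //= leq_addr.
have [n0 winvJ] := sum_winv a0 w (fun j => `|a j| `^ p) (maxn J N).
apply: le_trans (_ : \sum_(j < maxn J N) `|a j| `^ p * winv w a j <= _); last first.
  rewrite -(big_mkord xpredT (fun j => `|a j| `^ p * winv w a j)).
  by rewrite (big_cat_nat (leq0n N) (leq_maxr _ _)) /= big_mkord lerD2l.
rewrite (winvJ (maxn n0 n) (leq_maxl _ _)).
have nn : (n <= maxn n0 n)%N := leq_maxr n0 n.
rewrite (big_ord_widen _ (fun k => `|a (sigma a k)| `^ p * w k) nn).
rewrite big_mkcond [leRHS]big_mkcond /=; apply: ler_sum => h _.
case: ifP => hn; first by rewrite (leq_trans (sJ _ hn)) ?leq_maxl.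
by case: ifP => // _; rewrite mulr_ge0 ?powR_ge0 ?weight_ge0.
Qed.

End SortedSums.

Section Truncation.
Variables (R : realType) (p : R) (w : nat -> R).
Hypotheses (p_ge1 : 1 <= p) (hw : weight_seq w).

Let p_gt0 : 0 < p. Proof. exact: lt_le_trans ltr01 p_ge1. Qed.

Lemma trunc_cvg0 i (a : nat -> R) : trunc i a @ \oo --> 0.
Proof.
by apply/cvgr0Pnorm_lt => e e0; exists i => // j /= ij; rewrite /trunc ltnNge ij normr0.
Qed.

Lemma norm_trunc_le i (a : nat -> R) j : `|trunc i a j| <= `|a j|.
Proof. by rewrite /trunc; case: ifP; rewrite ?normr0. Qed.

Lemma trunc_sorted_support i (a : nat -> R) : exists L, [/\ (L <= i)%N,
  forall k, (k < L)%N -> (sigma (trunc i a) k < i)%N &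
  forall k, (L <= k)%N -> trunc i a (sigma (trunc i a) k) = 0].
Proof.
set b := trunc i a; have b0 : b @ \oo --> 0 := trunc_cvg0 i a.
have [k0 k0i ik0] : exists2 k, (k <= i)%N & (i <= sigma b k)%N.
  apply: contrapT => none.
  have sub : {subset map (sigma b) (iota 0 i.+1) <= iota 0 i}.
    move=> x /mapP[k]; rewrite !mem_iota /= ltnS => ki ->.
    by rewrite ltnNge; apply/negP => ik; apply: none; exists k.
  have u : uniq (map (sigma b) (iota 0 i.+1)).
    by rewrite (map_inj_uniq (sigma_inj b0)) iota_uniq.
  by have := uniq_leq_size u sub; rewrite size_map_iota size_iota ltnn.
have exL : exists k, (i <= sigma b k)%N by exists k0.
case: (ex_minnP exL) => L iL minL; exists L; split.
- exact: leq_trans (minL _ ik0) k0i.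
- by move=> k kL; rewrite ltnNge; apply: contraTN kL => /minL; rewrite -leqNgt.
move=> k Lk; apply/normr0_eq0/eqP; rewrite eq_le normr_ge0 andbT.
apply: le_trans (greedy_nonincreasing (greedy_sigma b0) Lk) _.
by rewrite /b /trunc ltnNge iL normr0.
Qed.

Lemma sorted_trunc_sum_le (a : nat -> R) i n : a @ \oo --> 0 ->
  \sum_(k < n) `|trunc i a (sigma (trunc i a) k)| `^ p * w k <=
  \sum_(k < n) `|a (sigma a k)| `^ p * w k.
Proof.
move=> a0; apply: (sorted_sum_le_dominated p_ge1 hw n a0 (trunc_cvg0 i a)) => j.
exact: norm_trunc_le.
Qed.

Lemma sorted_trunc_insert_ge i (a : nat -> R) j r L :
  (forall k, (k < L)%N -> (sigma (trunc i a) k < i)%N) -> (r <= L)%N ->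
  \sum_(k < L) `|trunc i a (sigma (trunc i a) k)| `^ p * w k
    + (`|a j| `^ p - `|trunc i a (sigma (trunc i a) r)| `^ p) * w r <=
  \sum_(k < L.+1) `|a (insert_at (sigma (trunc i a)) r j k)| `^ p * w k.
Proof.
move=> below rL; have b0 := trunc_cvg0 i a.
set b := trunc i a in b0 below *; set t := sigma b in below *.
have bE k : (k < L)%N -> `|a (t k)| `^ p = `|b (t k)| `^ p.
  by move=> /below ik; rewrite /b /trunc ik.
rewrite -(big_mkord xpredT (fun k => `|b (t k)| `^ p * w k)).
rewrite -(big_mkord xpredT (fun k => `|a (insert_at t r j k)| `^ p * w k)).
rewrite (sum_insert_at (fun k x => `|a x| `^ p * w k) _ _ rL).
have -> : \sum_(0 <= k < r) `|a (t k)| `^ p * w k =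
          \sum_(0 <= k < r) `|b (t k)| `^ p * w k.
  by apply: eq_big_nat => k /andP[_ kr]; rewrite bE // (leq_trans kr rL).
have -> : \sum_(r <= k < L) `|a (t k)| `^ p * w k.+1 =
          \sum_(r <= k < L) `|b (t k)| `^ p * w k.+1.
  by apply: eq_big_nat => k /andP[_ kL]; rewrite bE.
apply: (sum_insert_ge (c := fun k => `|b (t k)| `^ p)) => //.
- by move=> k rk; apply: (greedy_nonincreasing (greedy_sigma_powR b0 (ltW p_gt0))).
- exact: weight_ge0.
- by move=> k; apply: weight_nonincreasing.
Qed.

Lemma normpwi_ge_winv (a : nat -> R) N : a @ \oo --> 0 ->
  (((\sum_(j < N) `|a j| `^ p * winv w a j) `^ p^-1)%:E <= normpwi p w N a)%E.
Proof.
move=> a0; have [n winvN] := sum_winv a0 w (fun j => `|a j| `^ p) N.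
rewrite (winvN n (leqnn n)).
have -> : \sum_(h < n | (sigma a h < N)%N) `|a (sigma a h)| `^ p * w h =
          \sum_(h < n) `|trunc N a (sigma a h)| `^ p * w h.
  rewrite big_mkcond; apply: eq_bigr => h _.
  by rewrite /trunc; case: ifP; rewrite ?normr0 ?powR0 ?mul0r // lt0r_neq0.
apply: (normpw_ge_arrangement p_ge1 hw (trunc N a)) => h k _ _.
exact: (@sigma_inj _ _ a0 h k).
Qed.

End Truncation.

Section Equinormed.
Variables (R : realType) (p : R) (w : nat -> R) (A : set (nat -> R)) (M : R).
Hypotheses (p_ge1 : 1 <= p) (hw : weight_seq w) (M_ge0 : 0 <= M).
Hypothesis A_bdd : forall a, A a -> (normpw p w a <= M%:E)%E.

Let p_gt0 : 0 < p. Proof. exact: lt_le_trans ltr01 p_ge1. Qed.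
Let p_neq0 : p != 0. Proof. exact: lt0r_neq0. Qed.
Let K := (M + 1) `^ p.
Let K_gt0 : 0 < K. Proof. by rewrite powR_gt0 // ltr_wpDl. Qed.
Let A_cvg0 a : A a -> a @ \oo --> 0.
Proof. by move=> /A_bdd; apply: normpw_bounded_cvg0. Qed.

Lemma arrangement_sum_le_perturbed (a : nat -> R) D d (s : nat -> nat) n :
  0 <= D -> D <= M `^ p -> 0 <= d -> d <= 1 ->
  (normpw p w a <= (D `^ p^-1 + d)%:E)%E -> {in gtn n &, injective s} ->
  \sum_(k < n) `|a (s k)| `^ p * w k <= D + d * K.
Proof.
move=> D0 DM d0 d1 aD sinj.
apply: le_trans (arrangement_sum_le p_ge1 hw aD sinj) _.
rewrite -{2}(powRVK p_neq0 D0); apply: powR_addr_le => //; first exact: powR_ge0.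
by rewrite -(ler_powR2 p_gt0) ?powR_ge0 ?powRVK.
Qed.

Lemma equinormed_gap (a : nat -> R) i d L : A a -> 0 <= d -> d <= 1 ->
  (forall k, (L <= k)%N -> trunc i a (sigma (trunc i a) k) = 0) ->
  (normpw p w a <= normpwi p w i a + d%:E)%E ->
  forall (s : nat -> nat) n, {in gtn n &, injective s} ->
  \sum_(k < n) `|a (s k)| `^ p * w k <=
  \sum_(k < L) `|trunc i a (sigma (trunc i a) k)| `^ p * w k + d * K.
Proof.
move=> Aa d0 d1 zero ai s n sinj; have b0 := trunc_cvg0 i a.
set b := trunc i a in b0 zero ai *.
apply: arrangement_sum_le_perturbed sinj => //.
- by rewrite sumr_ge0 // => k _; rewrite mulr_ge0 ?powR_ge0 ?weight_ge0.
- apply: le_trans (sorted_trunc_sum_le p_ge1 hw i L (A_cvg0 Aa)) _.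
  exact (sorted_sum_le p_ge1 hw L (A_bdd Aa)).
- apply: le_trans ai _; rewrite EFinD leeD2r // /normpwi -/b.
  by apply: (normpw_le_sorted_support p_ge1 hw b0) => k kL; exact: zero.
Qed.

Lemma uniform_sorted_tail : equinormed p w A -> forall eps, 0 < eps ->
  exists i, forall a, A a -> forall n, (i <= n)%N ->
    \sum_(i <= k < n) `|a (sigma a k)| `^ p * w k <= eps.
Proof.
move=> eqA eps eps0; set d := Num.min 1 (eps / K).
have d0 : 0 < d by rewrite lt_min ltr01 divr_gt0.
have d1 : d <= 1 by rewrite ge_min lexx.
have dK : d * K <= eps by rewrite -ler_pdivlMr // ge_min lexx orbT.
have [i Hi] := eqA d d0; exists i => a Aa n ni; have a0 := A_cvg0 Aa.
have [L [Li _ zero]] := trunc_sorted_support i a.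
have gap := equinormed_gap Aa (ltW d0) d1 zero (Hi a Aa).
have := gap (sigma a) n (fun h k _ _ => @sigma_inj _ _ a0 h k).
have : \sum_(k < L) `|trunc i a (sigma (trunc i a) k)| `^ p * w k <=
       \sum_(k < i) `|a (sigma a k)| `^ p * w k.
  apply: le_trans (sorted_trunc_sum_le p_ge1 hw i L a0) _.
  apply: (ler_sum_widen (F := fun k => `|a (sigma a k)| `^ p * w k)) Li _ => k.
  by rewrite mulr_ge0 ?powR_ge0 ?weight_ge0.
rewrite -!(big_mkord xpredT (fun k => `|a (sigma a k)| `^ p * w k)).
rewrite (big_cat_nat (leq0n i) ni) /=; lra.
Qed.

Lemma trunc_sorted_entry_small (a : nat -> R) i e n : A a -> 0 < e ->
  M `^ p / e < \sum_(k < n) w k -> `|trunc i a (sigma (trunc i a) n)| `^ p <= e.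
Proof.
move=> Aa e0 large; rewrite leNgt; apply/negP => e_lt.
have W : M `^ p < e * \sum_(k < n.+1) w k.
  rewrite mulrC -ltr_pdivrMr //; apply: lt_le_trans large _.
  exact: (ler_sum_widen (F := w)) (leqnSn n) (weight_ge0 hw).
have W0 : 0 < \sum_(k < n.+1) w k.
  by rewrite -(pmulr_rgt0 _ e0); apply: le_lt_trans W; exact: powR_ge0.
have : `|trunc i a (sigma (trunc i a) n)| `^ p * \sum_(k < n.+1) w k <= M `^ p.
  apply: (sorted_entry_le p_ge1 hw (trunc_cvg0 i a)).
  apply: le_trans (sorted_trunc_sum_le p_ge1 hw i n.+1 (A_cvg0 Aa)) _.
  exact (sorted_sum_le p_ge1 hw n.+1 (A_bdd Aa)).
have : e * \sum_(k < n.+1) w k <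
       `|trunc i a (sigma (trunc i a) n)| `^ p * \sum_(k < n.+1) w k.
  by rewrite ltr_pM2r.
lra.
Qed.

Lemma uniform_decay : equinormed p w A -> forall eta, 0 < eta ->
  exists i, forall a, A a -> forall j, (i <= j)%N -> `|a j| `^ p <= eta.
Proof.
move=> eqA eta eta0; set e := eta / 2; have e0 : 0 < e by rewrite divr_gt0.
have [R0 R0large] := weight_sum_unbounded hw (M `^ p / e).
have wR0 := weight_gt0 hw R0.
set d := Num.min 1 (e * w R0 / K).
have d0 : 0 < d by rewrite lt_min ltr01 divr_gt0 ?mulr_gt0.
have d1 : d <= 1 by rewrite ge_min lexx.
have dK : d * K <= e * w R0 by rewrite -ler_pdivlMr // ge_min lexx orbT.
have [i Hi] := eqA d d0; exists i => a Aa j ij.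
have [L [_ below zero]] := trunc_sorted_support i a.
have gap := equinormed_gap Aa (ltW d0) d1 zero (Hi a Aa).
have b0 := trunc_cvg0 i a; set r := minn R0 L; have rL : (r <= L)%N := geq_minr R0 L.
have cr : `|trunc i a (sigma (trunc i a) r)| `^ p <= e.
  case: (leqP R0 L) => [R0L|LR0]; last first.
    by rewrite /r (minn_idPr (ltnW LR0)) zero // normr0 powR0 // ltW.
  by rewrite /r (minn_idPl R0L); apply: trunc_sorted_entry_small.
(* Insert [a j] at position [r] into the sorted truncation: shifting the later
   terms loses at most [w r] times its [r]-th entry (itself at most [e]), while
   the gap bounds the excess by [d * K <= e * w r]; hence [|a j|^p <= 2 e]. *)
have sinj : {in gtn L.+1 &, injective (insert_at (sigma (trunc i a)) r j)}.
  apply: insert_at_inj rL _ _ => [h k _ _|m /below mi]; first exact: (sigma_inj b0).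
  by rewrite neq_ltn (leq_trans mi ij).
have := gap _ L.+1 sinj; have := sorted_trunc_insert_ge p_ge1 hw j below rL.
have : e * w R0 <= e * w r.
  by rewrite ler_wpM2l ?(ltW e0) // (weight_nonincreasing hw (geq_minl R0 L)).
move=> ewr ins gapj.
have : (`|a j| `^ p - `|trunc i a (sigma (trunc i a) r)| `^ p) * w r <= e * w r by lra.
rewrite ler_pM2r ?weight_gt0 //; move: cr; rewrite /e => cr xcr; lra.
Qed.

Lemma tail_small_of_equinormed : equinormed p w A -> forall eps, 0 < eps ->
  exists N, forall a, A a -> forall i, (N <= i)%N ->
    (\sum_(i <= j <oo) (`|a j| `^ p * winv w a j)%:E < eps%:E)%E.
Proof.
move=> eqA eps eps0; have eps3 : 0 < eps / 3 by rewrite divr_gt0.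
have [i1 tail] := uniform_sorted_tail eqA eps3.
have i1S : 0 < i1.+1%:R :> R by rewrite ltr0n.
set eta := eps / 3 / i1.+1%:R; have eta0 : 0 < eta by rewrite divr_gt0.
have [i2 decay] := uniform_decay eqA eta0.
exists (maxn i1 i2) => a Aa i Ni.
apply: (@le_lt_trans _ _ ((eps / 3 + eps / 3)%:E)); last by rewrite lte_fin; lra.
apply: nneseries_le_bound => [k|J]; first by rewrite mulr_ge0 ?powR_ge0 ?winv_ge0.
have [n0 tailJ] := @sum_winv_tail_le R p w hw a i J (A_cvg0 Aa).
set n := maxn n0 i1; apply: le_trans (tailJ n (leq_maxl _ _)) _.
rewrite (big_cat_nat (leq0n i1) (leq_maxr _ _)) /=; apply: lerD.
- apply: le_trans (_ : \sum_(0 <= h < i1) eta <= _).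
    rewrite big_nat [leRHS]big_nat ler_sum // => h _.
    case: ifP => ih; last by rewrite mul0r ltW.
    apply: le_trans (_ : `|a (sigma a h)| `^ p * 1 <= _).
      by rewrite ler_wpM2l ?powR_ge0 ?weight_le1.
    rewrite mulr1 decay //; apply: leq_trans ih; apply: leq_trans Ni; exact: leq_maxr.
  rewrite sumr_const_nat subn0; apply: le_trans (_ : eta *+ i1.+1 <= _).
    by rewrite mulrSr lerDl (ltW eta0).
  by rewrite /eta -[_ *+ i1.+1]mulr_natr divfK ?gt_eqF.
- apply: le_trans (tail a Aa n (leq_maxr _ _)); rewrite big_nat [leRHS]big_nat.
  apply: ler_sum => h _; case: ifP => _ //.
  by rewrite mul0r mulr_ge0 ?powR_ge0 ?weight_ge0.
Qed.

Lemma equinormed_of_tail_small :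
  (forall eps, 0 < eps -> exists N, forall a, A a -> forall i, (N <= i)%N ->
     (\sum_(i <= j <oo) (`|a j| `^ p * winv w a j)%:E < eps%:E)%E) ->
  equinormed p w A.
Proof.
move=> small eps eps0; have [N HN] := small _ (powR_gt0 p eps0).
exists N => a Aa; have a0 := A_cvg0 Aa.
have F_ge0 j : 0 <= `|a j| `^ p * winv w a j by rewrite mulr_ge0 ?powR_ge0 ?winv_ge0.
have T_lt := HN a Aa N (leqnn N); set T := (\sum_(N <= j <oo) _)%E in T_lt.
have T_ge0 : (0 <= T)%E by apply: nneseries_ge0 => j _ _; rewrite lee_fin.
have TE : T = (fine T)%:E by rewrite fineK // ge0_fin_numE // (lt_trans T_lt) ?ltry.
have T_partial J : \sum_(N <= j < J) `|a j| `^ p * winv w a j <= fine T.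
  by rewrite -lee_fin -TE -sumEFin; apply: nneseries_lim_ge => j _ _; rewrite lee_fin.
apply: le_trans (normpw_le_winv p_ge1 hw a0 T_partial) _.
set S := \sum_(j < N) _; have S_ge0 : 0 <= S by rewrite sumr_ge0.
have fineT_ge0 : 0 <= fine T by rewrite -lee_fin -TE.
apply: le_trans (_ : ((S `^ p^-1 + fine T `^ p^-1)%:E <= _)%E).
  by rewrite lee_fin powR_inv_subadditive.
rewrite EFinD; apply: leeD; first by apply: (normpwi_ge_winv p_ge1 hw).
rewrite lee_fin -[leRHS](powRKV p_neq0 (ltW eps0)).
by rewrite ler_powR2 ?invr_gt0 ?powR_ge0 //; apply: ltW; rewrite -lte_fin -TE.
Qed.

End Equinormed.

Unset Implicit Arguments. Set Strict Implicit.

Theorem mainTheorem14 (R : realType) (p : R) (w : nat -> R) (A : set (nat -> R))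
  (hp : 1 <= p) (hw : weight_seq w)
  (hA : forall a, A a -> Lpw p w a)
  (hbdd : exists M : R, forall a, A a -> (normpw p w a <= M%:E)%E) :
  equinormed p w A <->
  (forall eps : R, 0 < eps -> exists N : nat, forall a, A a -> forall i, (N <= i)%N ->
     (\sum_(i <= j <oo) (powR `|a j| p * winv w a j)%:E < eps%:E)%E).
Proof.
have [M0 hM0] := hbdd; set M := Num.max M0 0.
have M_ge0 : 0 <= M by rewrite le_max lexx orbT.
have A_bdd a : A a -> (normpw p w a <= M%:E)%E.
  by move=> Aa; apply: le_trans (hM0 a Aa) _; rewrite lee_fin /M le_max lexx.
split => [eqA|small]; first exact: (tail_small_of_equinormed hp hw M_ge0 A_bdd eqA).
exact: (equinormed_of_tail_small hp hw A_bdd small).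
Qed.
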